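(* Let $d_1,d_2,r\in\mathbb{N}_+$ and let $\mathcal{X}=\{\boldsymbol a_i\boldsymbol b_j^T:(i,j)\in[d_1]\times[d_2]\}$, where $\boldsymbol a_i\in\mathbb{R}^{d_1}$ and $\boldsymbol b_j\in\mathbb{R}^{d_2}$ are the standard basis vectors. Represent a function $f:\mathcal{X}\to[-1,1]$ by the matrix $\boldsymbol\Theta=[\![f(\boldsymbol a_i\boldsymbol b_j^T)]\!]\in[-1,1]^{d_1\times d_2}$. If $f$ is globally rank-$r$ sign representable, then $\max_{\pi\in[-1,1]}\mathrm{srank}(\boldsymbol\Theta-\pi)\le r+1$. Conversely, if $\max_{\pi\in[-1,1]}\mathrm{srank}(\boldsymbol\Theta-\pi)\le r$, then the function $f$ defined by $f(\boldsymbol a_i\boldsymbol b_j^T)=\Theta_{ij}$ is globally rank-$r$ sign representable.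
   Context: Sign convention: $\mathrm{sgn}(x)=1$ if $x>0$ and $\mathrm{sgn}(x)=-1$ otherwise; applied to matrices entrywise. For a matrix $\boldsymbol\Theta$ and scalar $\pi$, $\boldsymbol\Theta-\pi$ means subtracting $\pi$ from every entry. Sign rank: $\mathrm{srank}(\boldsymbol\Theta)=\min\{\mathrm{rank}(\boldsymbol\Theta'):\boldsymbol\Theta'\in\mathbb{R}^{d_1\times d_2},\ \mathrm{sgn}(\boldsymbol\Theta')=\mathrm{sgn}(\boldsymbol\Theta)\}$. A function $f:\mathcal{X}\to[-1,1]$ on $\mathcal{X}\subset\mathbb{R}^{d_1\times d_2}$ is $(r,\pi)$-sign representable if there exist a matrix $\boldsymbol B\in\mathbb{R}^{d_1\times d_2}$ of rank at most $r$ and $b\in\mathbb{R}$ with $\mathrm{sgn}(f(\boldsymbol X)-\pi)=\mathrm{sgn}(\langle\boldsymbol X,\boldsymbol B\rangle+b)$ for all $\boldsymbol X\in\mathcal{X}$, where $\langle\boldsymbol X,\boldsymbol B\rangle=\mathrm{tr}(\boldsymbol X\boldsymbol B^T)$; it is globally rank-$r$ sign representable if it is $(r,\pi)$-sign representable for every $\pi\in[-1,1]$. *)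

From mathcomp Require Import all_boot all_order all_algebra.
From mathcomp Require Import boolp reals.
Set Implicit Arguments. Unset Strict Implicit. Unset Printing Implicit Defensive.
Import Order.TTheory GRing.Theory Num.Theory.
Local Open Scope ring_scope.

Section SignRank.
Variable R : realType.

Definition sgn (x : R) : R := if 0 < x then 1 else -1.

Definition sgn_mx m n (A : 'M[R]_(m, n)) : 'M[R]_(m, n) := map_mx sgn A.

Definition mx_subc m n (A : 'M[R]_(m, n)) (pi : R) : 'M[R]_(m, n) :=
  A - const_mx pi.

Definition srank_ranks m n (A : 'M[R]_(m, n)) : pred nat :=
  fun k => `[< exists B : 'M[R]_(m, n), sgn_mx B = sgn_mx A /\ \rank B = k >].

Lemma srank_ranks_ex m n (A : 'M[R]_(m, n)) : exists k, srank_ranks A k.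
Proof. by exists (\rank A); apply/asboolP; exists A. Qed.

Definition srank m n (A : 'M[R]_(m, n)) : nat := ex_minn (srank_ranks_ex A).

Definition mx_inner m n (X B : 'M[R]_(m, n)) : R := \tr (X *m B^T).

Definition sign_representable m n (Xs : 'M[R]_(m, n) -> Prop)
    (f : 'M[R]_(m, n) -> R) (r : nat) (pi : R) : Prop :=
  exists (B : 'M[R]_(m, n)) (b : R), (\rank B <= r)%N /\
    forall X, Xs X -> sgn (f X - pi) = sgn (mx_inner X B + b).

Definition globally_sign_representable m n (Xs : 'M[R]_(m, n) -> Prop)
    (f : 'M[R]_(m, n) -> R) (r : nat) : Prop :=
  forall pi : R, -1 <= pi <= 1 -> sign_representable Xs f r pi.

Definition std_basis m (i : 'I_m) : 'cV[R]_m := delta_mx i 0.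

Definition rank_one_basis m n : 'M[R]_(m, n) -> Prop :=
  fun X => exists (i : 'I_m) (j : 'I_n), X = std_basis i *m (std_basis j)^T.

End SignRank.

(* For X = a_i b_j^T we have <X, B> = B_ij, so (r, pi)-sign representability
   of f says exactly that Theta - pi has the sign pattern of B + b 1 1^T for
   some B of rank at most r.  That matrix has rank at most r + 1, and
   conversely a matrix of rank at most r with the sign pattern of Theta - pi
   is a representation with offset b = 0. *)
From mathcomp Require Import all_boot all_order all_algebra.
From mathcomp Require Import boolp reals.
Set Implicit Arguments. Unset Strict Implicit. Unset Printing Implicit Defensive.
Import Order.TTheory GRing.Theory Num.Theory.
Local Open Scope ring_scope.

Lemma mxtrace_delta_mul (R : pzRingType) m n (i : 'I_m) (j : 'I_n)
    (A : 'M[R]_(n, m)) :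
  \tr (delta_mx i j *m A) = A j i.
Proof.
rewrite /mxtrace (bigD1 i) //= big1 ?addr0 => [|k nki].
  rewrite mxE (bigD1 j) //= big1 ?addr0 => [|l nlj].
    by rewrite mxE !eqxx mul1r.
  by rewrite mxE eqxx (negbTE nlj) mul0r.
by rewrite mxE big1 // => l _; rewrite mxE (negbTE nki) mul0r.
Qed.

Lemma mxrank_const_mx (F : fieldType) m n (b : F) :
  (\rank (const_mx b : 'M[F]_(m, n)) <= 1)%N.
Proof.
have -> : (const_mx b : 'M[F]_(m, n)) =
    (const_mx 1 : 'M[F]_(m, 1)) *m (const_mx b : 'M[F]_(1, n)).
  by apply/matrixP => x y; rewrite !mxE big_ord1 !mxE mul1r.
exact: mulmx_max_rank.
Qed.

Section SignRankFacts.
Variable R : realType.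

Lemma srank_le_rank m n (A B : 'M[R]_(m, n)) :
  sgn_mx B = sgn_mx A -> (srank A <= \rank B)%N.
Proof.
move=> sgnBA; rewrite /srank; case: ex_minnP => k _ /(_ (\rank B)); apply.
by apply/asboolP; exists B.
Qed.

Lemma srank_witness m n (A : 'M[R]_(m, n)) :
  exists B : 'M[R]_(m, n), sgn_mx B = sgn_mx A /\ \rank B = srank A.
Proof. by rewrite /srank; case: ex_minnP => k /asboolP. Qed.

Lemma std_basis_mulT m n (i : 'I_m) (j : 'I_n) :
  std_basis R i *m (std_basis R j)^T = delta_mx i j.
Proof. by rewrite /std_basis trmx_delta mul_delta_mx. Qed.

Lemma mx_inner_std_basis m n (i : 'I_m) (j : 'I_n) (B : 'M[R]_(m, n)) :
  mx_inner (std_basis R i *m (std_basis R j)^T) B = B i j.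
Proof. by rewrite /mx_inner std_basis_mulT mxtrace_delta_mul mxE. Qed.

Lemma rank_one_basis_std m n (i : 'I_m) (j : 'I_n) :
  rank_one_basis (std_basis R i *m (std_basis R j)^T).
Proof. by exists i, j. Qed.

Variables (m n : nat) (Theta : 'M[R]_(m, n)) (f : 'M[R]_(m, n) -> R).
Hypothesis f_std :
  forall i j, f (std_basis R i *m (std_basis R j)^T) = Theta i j.

Lemma sign_representable_srank r pi :
  sign_representable (@rank_one_basis R m n) f r pi ->
  (srank (mx_subc Theta pi) <= r.+1)%N.
Proof.
case=> B [b [rkB sgn_f]].
have sgnBb : sgn_mx (B + const_mx b) = sgn_mx (mx_subc Theta pi).
  apply/matrixP => i j; rewrite !mxE.
  by rewrite -f_std (sgn_f _ (rank_one_basis_std i j)) mx_inner_std_basis.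
apply: leq_trans (srank_le_rank sgnBb) _.
apply: leq_trans (mxrank_add _ _) _.
by rewrite -addn1 leq_add // mxrank_const_mx.
Qed.

Lemma srank_sign_representable r pi :
  (srank (mx_subc Theta pi) <= r)%N ->
  sign_representable (@rank_one_basis R m n) f r pi.
Proof.
move=> srk; have [B [sgnB rkB]] := srank_witness (mx_subc Theta pi).
exists B, 0; split; first by rewrite rkB.
move=> _ [i [j ->]]; rewrite f_std mx_inner_std_basis addr0.
by have := congr1 (fun M : 'M[R]_(m, n) => M i j) sgnB; rewrite !mxE.
Qed.

End SignRankFacts.

Theorem proposition1 (R : realType) (d1 d2 r : nat)
    (hd1 : (0 < d1)%N) (hd2 : (0 < d2)%N) (hr : (0 < r)%N)
    (Theta : 'M[R]_(d1, d2)) (f : 'M[R]_(d1, d2) -> R)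
    (hTheta : forall i j, -1 <= Theta i j <= 1)
    (hf : forall i j, f (@std_basis R d1 i *m (@std_basis R d2 j)^T) = Theta i j) :
  (globally_sign_representable (@rank_one_basis R d1 d2) f r ->
     forall pi : R, -1 <= pi <= 1 -> (srank (mx_subc Theta pi) <= r.+1)%N)
  /\
  ((forall pi : R, -1 <= pi <= 1 -> (srank (mx_subc Theta pi) <= r)%N) ->
     globally_sign_representable (@rank_one_basis R d1 d2) f r).
Proof.
split=> [grep pi pi_range | srk pi pi_range].
  exact: sign_representable_srank hf _ _ (grep pi pi_range).
exact: srank_sign_representable hf _ _ (srk pi pi_range).
Qed.
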